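(* Let $\Gamma$ be a weighted digraph with vertex set $\{1,\dots,n\}$, $n>1$, without loops and with strictly positive arc weights, with Laplacian matrix $L$, in-forest dimension $d$, and let $\tilde J=\sigma_{n-d}^{-1}Q_{n-d}$. Then $$\tilde J=\lim_{\tau\to\infty}J(\tau)=\lim_{\tau\to\infty}(I+\tau L)^{-1}.$$
   Context: $W=(w_{ij})$ is the matrix of arc weights ($w_{ij}>0$ iff there is an arc $i\to j$, else $0$). The Laplacian $L=(\ell_{ij})$: $\ell_{ij}=-w_{ij}$ for $j\ne i$, $\ell_{ii}=\sum_{k\ne i}w_{ik}$. The weight of a subgraph is the product of its arc weights (1 if no arcs); the weight of a set of subgraphs is the sum of their weights. A converging tree is a weakly connected digraph with one vertex (the root) of outdegree 0 and all others of outdegree 1; an in-forest is a spanning subgraph of $\Gamma$ whose weak components are converging trees. The in-forest dimension $d$ is the minimal number of trees in an in-forest (so in-forests have at most $n-d$ arcs). $\sigma_k$ is the total weight of in-forests with $k$ arcs; $Q_k=(q^k_{ij})$ with $q^k_{ij}$ the total weight of in-forests with $k$ arcs in which $i$ lies in a tree rooted at $j$. For $\tau\ge0$, $Q(\tau)=\sum_{k=0}^{n-d}Q_k\tau^k$, $\sigma(\tau)=\sum_{k=0}^{n-d}\sigma_k\tau^k$ and $J(\tau)=\sigma(\tau)^{-1}Q(\tau)$. *)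

From HB Require Import structures.
From mathcomp Require Import all_boot all_order all_algebra.
From mathcomp Require Import all_classical all_reals all_analysis.
Set Implicit Arguments. Unset Strict Implicit. Unset Printing Implicit Defensive.
Import Order.TTheory GRing.Theory Num.Theory.
Local Open Scope ring_scope.

Section InForests.
Variables (R : realType) (n : nat).
Implicit Types (w : 'M[R]_n).

Definition laplacian w : 'M[R]_n :=
  \matrix_(i, j) (if i == j then \sum_(k | k != i) w i k else - w i j).

(* A spanning subgraph in which every vertex has outdegree <= 1 is encoded by
   f : vertex -> option vertex (f i = Some j  iff  the arc i -> j is present). *)
Definition step (f : {ffun 'I_n -> option 'I_n}) (x : option 'I_n) :=
  obind f x.

(* f is an in-forest of the digraph with weights w: every chosen arc is an arc
   of Gamma (positive weight) and there are no cycles (following the arcs from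
   any vertex one leaves the graph after at most n steps), so that the weak
   components are converging trees. *)
Definition inforest w (f : {ffun 'I_n -> option 'I_n}) : bool :=
  [forall i, forall j, (f i == Some j) ==> (0 < w i j)] &&
  [forall i, iter n (step f) (Some i) == None].

Definition narcs (f : {ffun 'I_n -> option 'I_n}) : nat := #|[set i | f i != None]|.
Definition ntrees (f : {ffun 'I_n -> option 'I_n}) : nat := #|[set i | f i == None]|.

Definition fweight w (f : {ffun 'I_n -> option 'I_n}) : R :=
  \prod_(i : 'I_n) (if f i is Some j then w i j else 1).

Definition rooted_at (f : {ffun 'I_n -> option 'I_n}) (i j : 'I_n) : bool :=
  (f j == None) && [exists k : 'I_n.+1, iter k (step f) (Some i) == Some j].

Definition inforest_dim w : nat :=
  \big[minn/n]_(f | inforest w f) ntrees f.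

Definition sigmak w (k : nat) : R :=
  \sum_(f | inforest w f && (narcs f == k)) fweight w f.

Definition Qk w (k : nat) : 'M[R]_n :=
  \matrix_(i, j) \sum_(f | [&& inforest w f, narcs f == k & rooted_at f i j])
                    fweight w f.

Definition sigma_t w (tau : R) : R :=
  \sum_(k < (n - inforest_dim w).+1) sigmak w k * tau ^+ k.

Definition Q_t w (tau : R) : 'M[R]_n :=
  \sum_(k < (n - inforest_dim w).+1) (tau ^+ k) *: Qk w k.

Definition J_t w (tau : R) : 'M[R]_n := (sigma_t w tau)^-1 *: Q_t w tau.

Definition J_tilde w : 'M[R]_n :=
  (sigmak w (n - inforest_dim w))^-1 *: Qk w (n - inforest_dim w).

End InForests.

From HB Require Import structures.
From mathcomp Require Import all_boot all_order all_algebra.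
From mathcomp Require Import all_classical all_reals all_analysis.
From mathcomp Require Import zify ring.
Set Implicit Arguments. Unset Strict Implicit. Unset Printing Implicit Defensive.
Import Order.TTheory GRing.Theory Num.Theory.
Import numFieldNormedType.Exports.
Local Open Scope classical_set_scope.
Local Open Scope ring_scope.

(* Write N = n - d. A sign-reversing involution on pairs (in-forest, extra arc
   out of vertex i), which reroutes the arc leaving i, gives the recurrence
   Q_(k+1) + L Q_k = sigma_(k+1) I, with Q_0 = I, sigma_0 = 1, and Q_k = 0,
   sigma_k = 0 for k > N.  Summed against tau^k it telescopes to the
   matrix-forest theorem (I + tau L) Q(tau) = sigma(tau) I, and sigma(tau) >= 1
   for tau >= 0, so J(tau) = (I + tau L)^-1.  Finally J(tau) is a ratio of
   polynomials of degree N whose leading coefficients are Q_N and sigma_N > 0,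
   hence tends to sigma_N^-1 Q_N as tau -> +oo. *)

Section FunctionalGraphs.
Variable n : nat.
Local Notation graph := {ffun 'I_n -> option 'I_n}.
Implicit Types (f g : graph) (x y i j m : 'I_n).

Definition walk f k x := iter k (step f) (Some x).
Definition acyclic f := forall x, walk f n x = None.
Definition avoids f x i := forall k, walk f k x != Some i.

Lemma iter_step_None f k : iter k (step f) None = None.
Proof. by elim: k => //= k ->. Qed.

Lemma walk0 f x y : walk f 0 x = Some y -> x = y.
Proof. by case. Qed.

Lemma walkS f k x : walk f k.+1 x = obind f (walk f k x).
Proof. by []. Qed.

Lemma walkSr f k x : walk f k.+1 x = if f x is Some y then walk f k y else None.
Proof. by rewrite /walk iterSr /=; case: (f x) => //; apply: iter_step_None. Qed.

Lemma walkD f a b x : walk f (a + b) x = iter a (step f) (walk f b x).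
Proof. by rewrite /walk iterD. Qed.

Lemma walk_None_le f k k' x : walk f k x = None -> (k <= k')%N -> walk f k' x = None.
Proof. by move=> h /subnK <-; rewrite walkD h iter_step_None. Qed.

Lemma walk_past_root f k x y : walk f k x = Some y -> f y = None ->
  forall p, (k < p)%N -> walk f p x = None.
Proof. by move=> h hy p /subnK <-; rewrite walkD walkS h /= hy iter_step_None. Qed.

Lemma walk_roots_eq f a b k1 k2 x : f a = None -> f b = None ->
  walk f k1 x = Some a -> walk f k2 x = Some b -> a = b.
Proof.
move=> ha hb h1 h2; case: (ltngtP k1 k2) => [lt|lt|eq].
- by move: (walk_past_root h1 ha lt); rewrite h2.
- by move: (walk_past_root h2 hb lt); rewrite h1.
- by move: h1; rewrite eq h2 => -[].
Qed.

Lemma walk_to_root f j q p x y : f j = None ->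
  walk f q x = Some j -> walk f p x = Some y -> walk f (q - p) y = Some j.
Proof.
move=> hj hq hp; case: (leqP p q) => le; last by move: (walk_past_root hq hj le); rewrite hp.
by have := walkD f (q - p) p x; rewrite subnK // hq hp.
Qed.

Lemma walk_cycle f k x : walk f k x = Some x -> forall q, walk f (k * q) x = Some x.
Proof. by move=> h; elim=> [|q IH]; rewrite ?muln0 // mulnS walkD IH. Qed.

Lemma acyclic_walk_lt f k x y : acyclic f -> walk f k x = Some y -> (k < n)%N.
Proof.
move=> ac h; rewrite ltnNge; apply/negP => le.
by move: (walk_None_le (ac x) le); rewrite h.
Qed.

Lemma acyclic_walk_self f k x : acyclic f -> walk f k x = Some x -> k = 0%N.
Proof.
move=> ac; case: k => // k h.
by have := acyclic_walk_lt ac (walk_cycle h n); rewrite mulSn ltnNge leq_addr.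
Qed.

(* Pigeonhole: the n + 1 vertices visited in n steps cannot all be distinct. *)
Lemma walk_n_cycle f x : walk f n x != None ->
  exists z k, (0 < k)%N /\ walk f k z = Some z.
Proof.
move=> hn; have visited p : (p <= n)%N -> walk f p x != None.
  by move=> le; apply: contra hn => /eqP hp; rewrite (walk_None_le hp le).
pose g (p : 'I_n.+1) : 'I_n := odflt x (walk f p x).
have /injectivePn [p1 [p2 ne12 eqg]] : ~~ injectiveb g.
  by apply/injectiveP => /leq_card; rewrite !card_ord ltnn.
wlog lt12 : p1 p2 ne12 eqg / (p1 < p2)%N.
  move=> wlog; case: (ltngtP p1 p2) => [lt|lt|/val_inj eq]; first exact: wlog lt.
    by apply: (wlog p2 p1) => //; rewrite eq_sym.
  by rewrite eq eqxx in ne12.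
move: eqg; rewrite /g.
case E1: (walk f p1 x) => [z|]; last by move: (visited p1 (ltn_ord p1)); rewrite E1.
case E2: (walk f p2 x) => [z'|]; last by move: (visited p2 (ltn_ord p2)); rewrite E2.
move=> /= ezz; subst z'; exists z, (p2 - p1)%N; rewrite subn_gt0; split=> //.
by have := walkD f (p2 - p1) p1 x; rewrite subnK ?E1 ?E2 // ltnW.
Qed.

Lemma terminating_acyclic f : (forall x, exists k, walk f k x = None) -> acyclic f.
Proof.
move=> term x; apply/eqP; apply: contraT => /walk_n_cycle [z [k [k0 hz]]].
have [q hq] := term z.
have := walk_cycle hz q; rewrite (walk_None_le hq) // leq_pmull //.
Qed.

Lemma walk_agree f g i x k : (forall y, y != i -> g y = f y) ->
  (forall k', (k' < k)%N -> walk f k' x != Some i) -> walk g k x = walk f k x.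
Proof.
move=> hfg; elim: k => [//|k IH] h.
rewrite !walkS IH => [|k' lt]; last by apply: h; apply: ltnW.
case E: (walk f k x) => [y|] //=; apply: hfg; apply: contraTneq (h k (ltnSn k)) => <-.
by rewrite E negbK.
Qed.

Lemma walk_agree_avoids f g i x : (forall y, y != i -> g y = f y) ->
  avoids f x i -> forall k, walk g k x = walk f k x.
Proof. by move=> hfg av k; apply: walk_agree hfg _ => k' _. Qed.

Lemma avoids_agree f g i x : (forall y, y != i -> g y = f y) ->
  avoids f x i -> avoids g x i.
Proof. by move=> hfg av k; rewrite (walk_agree_avoids hfg av). Qed.

Lemma acyclic_rewire f g i : acyclic f -> (forall y, y != i -> g y = f y) ->
  (if g i is Some m then avoids f m i else True) -> acyclic g.
Proof.
move=> ac hfg hgi; apply: terminating_acyclic => x.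
case: (pselect (exists p, walk f p x == Some i)) => [hit|miss]; last first.
  exists n; rewrite (walk_agree_avoids hfg) ?ac // => k.
  by apply/negP => hk; apply: miss; exists k.
case: (ex_minnP hit) => p /eqP hp hmin.
have hg : walk g p x = Some i.
  rewrite (walk_agree hfg) // => k' lt; apply/negP => /hmin.
  by rewrite leqNgt lt.
move: hgi; case E: (g i) => [m|] hav.
- exists (n + p.+1)%N; rewrite walkD walkS hg /= E.
  by rewrite -/(walk g n m) (walk_agree_avoids hfg hav) ac.
- by exists p.+1; rewrite walkS hg /= E.
Qed.

Lemma acyclic_avoids_succ f i m : acyclic f -> f i = Some m -> avoids f m i.
Proof.
move=> ac fi k; apply/negP => /eqP h.
have : walk f k.+1 i = Some i by rewrite walkSr fi.
by move/(acyclic_walk_self ac).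
Qed.

Lemma rooted_at_root f x j : rooted_at f x j -> f j = None.
Proof. by case/andP => /eqP. Qed.

Lemma rooted_at_walk f x j : rooted_at f x j -> exists k, walk f k x = Some j.
Proof. by case/andP => _ /existsP [k /eqP h]; exists k. Qed.

Lemma walk_rooted_at f x j k : acyclic f -> f j = None -> walk f k x = Some j ->
  rooted_at f x j.
Proof.
move=> ac hj hk; apply/andP; split; first by rewrite hj.
have lt : (k < n.+1)%N := ltnW (acyclic_walk_lt ac hk).
apply/existsP; exists (Ordinal lt).
by rewrite /= -/(walk f k x) hk.
Qed.

Lemma rooted_at_nonroot f i j : rooted_at f i j -> i != j -> f i != None.
Proof.
move=> /rooted_at_walk [[|k] hk] ne; first by rewrite (walk0 hk) eqxx in ne.
by apply/negP => /eqP fi; move: hk; rewrite walkSr fi.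
Qed.

Lemma rooted_at_id f i : rooted_at f i i = (f i == None).
Proof.
apply/idP/idP => [/rooted_at_root/eqP //|fi].
by rewrite /rooted_at fi; apply/existsP; exists ord0.
Qed.

Lemma rooted_at_uniq f x i j : rooted_at f x i -> rooted_at f x j -> i = j.
Proof.
move=> ri rj; have [a ha] := rooted_at_walk ri; have [b hb] := rooted_at_walk rj.
exact: walk_roots_eq (rooted_at_root ri) (rooted_at_root rj) ha hb.
Qed.

Definition redirect f i (o : option 'I_n) : graph :=
  [ffun y => if y == i then o else f y].

Lemma redirect_at f i o : redirect f i o i = o.
Proof. by rewrite ffunE eqxx. Qed.

Lemma redirect_other f i o y : y != i -> redirect f i o y = f y.
Proof. by rewrite ffunE => /negbTE ->. Qed.

Lemma redirect_redirect f i o o' : redirect (redirect f i o) i o' = redirect f i o'.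
Proof. by apply/ffunP => y; rewrite !ffunE; case: (y == i). Qed.

Lemma redirect_id f i : redirect f i (f i) = f.
Proof. by apply/ffunP => y; rewrite !ffunE; case: eqP => // ->. Qed.

Lemma eq_redirect_None f i : (redirect f i None == f) = (f i == None).
Proof. by apply/eqP/eqP => [<-|fi]; rewrite ?redirect_at // -fi redirect_id. Qed.

Lemma narcs_redirect f i o :
  (narcs (redirect f i o) + (f i != None) = narcs f + (o != None))%N.
Proof.
rewrite /narcs (cardsD1 i [set y | f y != None]).
rewrite (cardsD1 i [set y | redirect f i o y != None]) !inE redirect_at.
have -> : [set y | redirect f i o y != None] :\ i = [set y | f y != None] :\ i.
  by apply/setP => y; rewrite !inE; case: eqP => // /eqP ne; rewrite redirect_other.
lia.
Qed.

Lemma narcs_redirect_Some f i m : f i != None -> narcs (redirect f i (Some m)) = narcs f.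
Proof. by move=> fi; have /eqP := narcs_redirect f i (Some m); rewrite fi eqn_add2r => /eqP. Qed.

Lemma ntrees_narcs f : (ntrees f + narcs f = n)%N.
Proof.
rewrite /ntrees /narcs addnC -[RHS]card_ord -(cardsC [set i | f i != None]).
by congr (_ + _)%N; apply: eq_card => i; rewrite !inE negbK.
Qed.

Lemma acyclic_cut f i : acyclic f -> acyclic (redirect f i None).
Proof.
by move=> ac; apply: acyclic_rewire ac (@redirect_other f i None) _; rewrite redirect_at.
Qed.

Lemma acyclic_link f i m : acyclic f -> avoids f m i -> acyclic (redirect f i (Some m)).
Proof.
by move=> ac av; apply: acyclic_rewire ac (@redirect_other f i _) _; rewrite redirect_at.
Qed.

Lemma walk_link f i m k : avoids f m i ->
  walk (redirect f i (Some m)) k.+1 i = walk f k m.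
Proof.
by move=> av; rewrite walkSr redirect_at (walk_agree_avoids (@redirect_other f i _) av).
Qed.

Lemma avoids_rootP f x i : acyclic f -> f i = None -> avoids f x i <-> ~~ rooted_at f x i.
Proof.
move=> ac fi; split=> [av|nr k]; first by apply/negP => /rooted_at_walk [k /eqP]; apply/negP.
by apply: contra nr => /eqP; apply: walk_rooted_at.
Qed.

Definition edgeless : graph := [ffun=> None].

Lemma narcs_eq0 f : narcs f = 0%N -> f = edgeless.
Proof.
move=> h; apply/ffunP => x; rewrite ffunE; apply/eqP; apply: contraT => nx.
by move: (card0_eq h x); rewrite !inE nx.
Qed.

Lemma narcs_edgeless : narcs edgeless = 0%N.
Proof. by apply: eq_card0 => x; rewrite !inE ffunE. Qed.

Lemma walk_edgeless k x : walk edgeless k.+1 x = None.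
Proof. by rewrite walkSr ffunE. Qed.

Lemma acyclic_edgeless : acyclic edgeless.
Proof.
move=> x; have n0 : (0 < n)%N := leq_ltn_trans (leq0n x) (ltn_ord x).
by rewrite /walk -[X in iter X](prednK n0) -/(walk _ _ x) walk_edgeless.
Qed.

Lemma ntrees_edgeless : ntrees edgeless = n.
Proof. by have := ntrees_narcs edgeless; rewrite narcs_edgeless addn0. Qed.

Lemma rooted_at_edgeless i j : rooted_at edgeless i j = (i == j).
Proof.
apply/idP/eqP => [r|<-]; last by rewrite rooted_at_id ffunE.
by have [[|k] hk] := rooted_at_walk r; [apply: walk0 hk | rewrite walk_edgeless in hk].
Qed.

End FunctionalGraphs.

HB.instance Definition _ := SemiGroup.isComLaw.Build nat minn minnA minnC.

Section IndicatorSums.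
Variables (R : pzRingType) (T : finType).
Implicit Types (P Q : pred T) (F : T -> R).

Lemma sum_indicator P F : \sum_(p | P p) F p = \sum_p (P p)%:R * F p.
Proof. by rewrite big_mkcond; apply: eq_bigr => p _; rewrite mulr_natl; case: (P p). Qed.

Lemma eq_bigl_nz P Q F : (forall p, F p != 0 -> P p = Q p) ->
  \sum_(p | P p) F p = \sum_(p | Q p) F p.
Proof.
move=> PQ; rewrite big_mkcond [RHS]big_mkcond; apply: eq_bigr => p _.
by case: (eqVneq (F p) 0) => [->|/PQ ->] //; case: (P p); case: (Q p).
Qed.

Lemma sumrB_indicators F (A B C D : pred T) :
  (forall p, F p != 0 -> (A p)%:R - (B p)%:R = (C p)%:R - (D p)%:R :> R) ->
  \sum_(p | A p) F p - \sum_(p | B p) F p = \sum_(p | C p) F p - \sum_(p | D p) F p.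
Proof.
move=> h; rewrite (sum_indicator A) (sum_indicator B) (sum_indicator C) (sum_indicator D).
rewrite -!sumrB; apply: eq_bigr => p _.
by case: (eqVneq (F p) 0) => [->|/h]; rewrite -?mulrBl ?mulr0 ?subrr // => ->.
Qed.

End IndicatorSums.

Section Forests.
Variables (R : realType) (n : nat) (w : 'M[R]_n).
Local Notation graph := {ffun 'I_n -> option 'I_n}.
Implicit Types (f G H : graph) (x y i j m : 'I_n) (p : graph * 'I_n).

Definition positive_arcs f := forall i j, f i = Some j -> 0 < w i j.

Lemma inforestP f : inforest w f <-> positive_arcs f /\ acyclic f.
Proof.
split.
- case/andP => /forallP arcs /forallP ac; split; [move=> i j fij | move=> x; exact/eqP/ac].
  by have /forallP/(_ j)/implyP := arcs i; apply; apply/eqP.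
- case=> arcs ac; apply/andP; split; apply/forallP => i; last exact/eqP/ac.
  by apply/forallP => j; apply/implyP => /eqP /arcs.
Qed.

Lemma positive_arcs_redirect f i o : positive_arcs f ->
  (forall m, o = Some m -> 0 < w i m) -> positive_arcs (redirect f i o).
Proof.
move=> arcs ho y z; case: (eqVneq y i) => [->|ne]; first by rewrite redirect_at; apply: ho.
by rewrite redirect_other //; apply: arcs.
Qed.

Definition arc_weight i (o : option 'I_n) : R := if o is Some j then w i j else 1.

Lemma fweight_redirect f i o :
  fweight w (redirect f i o) * arc_weight i (f i) = fweight w f * arc_weight i o.
Proof.
rewrite /fweight (bigD1 i) //= [in RHS](bigD1 i) //= redirect_at.
under eq_bigr => y ne do rewrite redirect_other //.
by rewrite /arc_weight; case: o => [a|]; case: (f i) => [b|]; ring.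
Qed.

Lemma inforest_attach G i m k : G i = None -> 0 < w i m ->
  (inforest w (redirect G i (Some m)) && (narcs (redirect G i (Some m)) == k.+1)) =
  [&& inforest w G, narcs G == k & ~~ rooted_at G m i].
Proof.
move=> Gi wim; set H := redirect G i (Some m).
have -> : (narcs H == k.+1) = (narcs G == k).
  by have := narcs_redirect G i (Some m); rewrite Gi addn0 addn1 -/H => ->.
apply/idP/idP.
- case/andP => /inforestP [arcsH acH] ->.
  have cut : redirect H i None = G by rewrite redirect_redirect -Gi redirect_id.
  have acG : acyclic G by rewrite -cut; apply: acyclic_cut.
  apply/andP; split.
  + by apply/inforestP; split=> //; rewrite -cut; apply: positive_arcs_redirect.
  + apply/(avoids_rootP _ acG Gi); apply: avoids_agree (fun y ny => esym (redirect_other _ _ ny)) _.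
    exact: acyclic_avoids_succ acH (redirect_at _ _ _).
- case/and3P => /inforestP [arcsG acG] -> nr; rewrite andbT; apply/inforestP; split.
    by apply: positive_arcs_redirect => // m' [<-].
  by apply: acyclic_link => //; apply/(avoids_rootP _ acG Gi).
Qed.

Lemma rooted_at_attach G i j m : i != j -> G i = None -> acyclic G -> avoids G m i ->
  rooted_at (redirect G i (Some m)) i j = rooted_at G m j.
Proof.
move=> ij Gi acG av; set H := redirect G i (Some m).
have acH : acyclic H by apply: acyclic_link.
have HG : forall y, y != i -> H y = G y by move=> y; apply: redirect_other.
have Hj : H j = G j by rewrite HG // eq_sym.
apply/idP/idP => r.
- have [[|k] hk] := rooted_at_walk r; first by rewrite (walk0 hk) eqxx in ij.
  by apply: (walk_rooted_at (k := k) acG); rewrite -?Hj -?(walk_link _ av) ?(rooted_at_root r).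
- have [k hk] := rooted_at_walk r.
  by apply: (walk_rooted_at (k := k.+1) acH); rewrite ?Hj ?walk_link ?(rooted_at_root r).
Qed.

Definition pair_weight i (p : graph * 'I_n) : R := w i p.2 * fweight w p.1.

Definition reroute i (p : graph * 'I_n) : graph * 'I_n :=
  (redirect p.1 i (Some p.2), odflt p.2 (p.1 i)).

Lemma rerouteK i p : p.1 i != None -> reroute i (reroute i p) = p.
Proof.
case: p => G m /=; case E: (G i) => [m0|] // _.
by rewrite /reroute /= E /= redirect_at redirect_redirect -E redirect_id.
Qed.

Lemma pair_weight_reroute i p : p.1 i != None ->
  pair_weight i (reroute i p) = pair_weight i p.
Proof.
case: p => G m /=; case E: (G i) => [m0|] // _.
by have := fweight_redirect G i (Some m); rewrite /pair_weight /= E /= mulrC => ->; rewrite mulrC.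
Qed.

Definition joins_tree i j k (p : graph * 'I_n) := (0 < w i p.2) &&
  [&& inforest w p.1, narcs p.1 == k, p.1 i != None, rooted_at p.1 p.2 j & ~~ rooted_at p.1 i j].

Definition leaves_tree i j k (p : graph * 'I_n) := (0 < w i p.2) &&
  [&& inforest w p.1, narcs p.1 == k, rooted_at p.1 i j & ~~ rooted_at p.1 p.2 j].

Lemma reroute_joins i j k p : i != j -> joins_tree i j k p -> leaves_tree i j k (reroute i p).
Proof.
case: p => G m ij /andP [wim /and5P [/inforestP [arcsG acG] nk Gi rmj nrij]] /=.
case E: (G i) Gi => [m0|] // _; rewrite /leaves_tree /reroute /= E /=.
set H := redirect G i (Some m).
have HG : forall y, y != i -> H y = G y by move=> y; apply: redirect_other.
have hj := rooted_at_root rmj; have [q hq] := rooted_at_walk rmj.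
have av : avoids G m i.
  move=> p; apply: contra nrij => /eqP hp.
  exact: walk_rooted_at acG hj (walk_to_root hj hq hp).
have acH : acyclic H by apply: acyclic_link.
have Hj : H j = None.
  by rewrite HG ?hj //; apply/eqP => ji; move: hj; rewrite ji E.
rewrite (arcsG _ _ E) /=; apply/and4P; split.
- by apply/inforestP; split=> //; apply: positive_arcs_redirect => // m' [<-].
- by rewrite narcs_redirect_Some ?E.
- by apply: (walk_rooted_at (k := q.+1) acH); rewrite // walk_link.
- apply: contra nrij => /rooted_at_walk [p hp].
  rewrite (walk_agree_avoids HG (acyclic_avoids_succ acG E)) in hp.
  by apply: (walk_rooted_at (k := p.+1) acG hj); rewrite walkSr E.
Qed.

Lemma reroute_leaves i j k p : i != j -> leaves_tree i j k p -> joins_tree i j k (reroute i p).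
Proof.
case: p => G m ij /andP [wim /and4P [/inforestP [arcsG acG] nk rij nrmj]] /=.
have := rooted_at_nonroot rij ij.
case E: (G i) => [m0|] // _; rewrite /joins_tree /reroute /= E /=.
set H := redirect G i (Some m).
have HG : forall y, y != i -> H y = G y by move=> y; apply: redirect_other.
have hj := rooted_at_root rij; have [q hq] := rooted_at_walk rij.
have av : avoids G m i.
  move=> p; apply: contra nrmj => /eqP hp.
  by apply: (walk_rooted_at (k := (q + p)%N) acG hj); rewrite walkD hp -/(walk G q i) hq.
have acH : acyclic H by apply: acyclic_link.
have Hj : H j = None.
  by rewrite HG ?hj //; apply/eqP => ji; move: hj; rewrite ji E.
rewrite (arcsG _ _ E) /=; apply/and5P; split.
- by apply/inforestP; split=> //; apply: positive_arcs_redirect => // m' [<-].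
- by rewrite narcs_redirect_Some ?E.
- by rewrite redirect_at.
- case: q hq => [|q] hq; first by rewrite (walk0 hq) eqxx in ij.
  apply: (walk_rooted_at (k := q) acH Hj).
  by rewrite (walk_agree_avoids HG (acyclic_avoids_succ acG E)) -hq walkSr E.
- apply: contra nrmj => /rooted_at_walk [[|p] hp]; first by rewrite (walk0 hp) eqxx in ij.
  by rewrite walk_link // in hp; apply: walk_rooted_at acG hj hp.
Qed.

Lemma sum_joins_leaves i j k : i != j ->
  \sum_(p | joins_tree i j k p) pair_weight i p = \sum_(p | leaves_tree i j k p) pair_weight i p.
Proof.
move=> ij; have nonroot p : leaves_tree i j k p -> p.1 i != None.
  by case/andP => _ /and4P [_ _ r _]; apply: rooted_at_nonroot r ij.
have joinsK p : joins_tree i j k (reroute i p) -> reroute i (reroute i p) = p ->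
    leaves_tree i j k p.
  by move=> jn e; rewrite -e; apply: reroute_joins.
rewrite (reindex_onto (reroute i) (reroute i)) => [|p /andP [_ /and5P [_ _ nr _ _]]]; last first.
  exact: rerouteK.
apply: eq_big => p.
- apply/andP/idP => [[jn /eqP]|lv]; first exact: joinsK.
  by split; [apply: reroute_leaves | apply/eqP; apply/rerouteK/nonroot].
- by move=> /andP [jn /eqP e]; rewrite pair_weight_reroute //; apply/nonroot/joinsK.
Qed.

Lemma sum_nonroot_pairs i (P : pred graph) :
  \sum_(H : graph | (H i != None) && P H) fweight w H =
  \sum_(p : graph * 'I_n | (p.1 i == None) && P (redirect p.1 i (Some p.2)))
    pair_weight i p.
Proof.
rewrite (reindex_onto (fun p : graph * 'I_n => redirect p.1 i (Some p.2))
                      (fun H : graph => (redirect H i None, odflt i (H i)))) => [|H]; last first.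
  by case E: (H i) => [a|] // _; rewrite /= redirect_redirect -E redirect_id.
apply: eq_big => [[G m]|[G m] /andP [_]] /=.
  by rewrite redirect_at /= redirect_redirect xpair_eqE eqxx andbT eq_redirect_None andbC.
rewrite redirect_redirect xpair_eqE eq_redirect_None => /andP [/eqP Gi _].
by have := fweight_redirect G i (Some m); rewrite Gi /= mulr1 mulrC => ->.
Qed.

Lemma sum_pairs i (P : graph -> 'I_n -> bool) :
  \sum_m w i m * \sum_(G | P G m) fweight w G = \sum_(p | P p.1 p.2) pair_weight i p.
Proof.
under eq_bigr do rewrite mulr_sumr.
by rewrite (exchange_big_dep xpredT) //= pair_big_dep.
Qed.

Lemma inforest_attach_rooted_at G i j m k : i != j -> G i = None -> 0 < w i m ->
  [&& inforest w (redirect G i (Some m)), narcs (redirect G i (Some m)) == k.+1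
    & rooted_at (redirect G i (Some m)) i j] = [&& inforest w G, narcs G == k & rooted_at G m j].
Proof.
move=> ij Gi wim; rewrite andbA inforest_attach //.
case fG: (inforest w G) => //=; case: (narcs G == k) => //=.
have [_ acG] := (inforestP G).1 fG.
case: (boolP (rooted_at G m i)) => [rmi|nrmi] /=.
  by apply/esym/negP => /(rooted_at_uniq rmi) eij; rewrite eij eqxx in ij.
by apply: rooted_at_attach => //; apply/(avoids_rootP _ acG Gi).
Qed.

Lemma sum_weighted_Qk_diff k i j : \sum_m w i m * (Qk w k i j - Qk w k m j) =
  \sum_(p | [&& inforest w p.1, narcs p.1 == k & rooted_at p.1 i j]) pair_weight i p -
  \sum_(p | [&& inforest w p.1, narcs p.1 == k & rooted_at p.1 p.2 j]) pair_weight i p.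
Proof.
rewrite -(sum_pairs i (fun G _ => [&& inforest w G, narcs G == k & rooted_at G i j])).
rewrite -(sum_pairs i (fun G m => [&& inforest w G, narcs G == k & rooted_at G m j])) -sumrB.
by apply: eq_bigr => m _; rewrite !mxE mulrBr.
Qed.

Hypothesis w_ge0 : forall i j, 0 <= w i j.

Lemma pair_weight_neq0 i p : pair_weight i p != 0 -> 0 < w i p.2.
Proof.
move=> h; rewrite lt0r w_ge0 andbT; apply: contraNneq h => e.
by rewrite /pair_weight e mul0r.
Qed.

(* Pairs (G, m) in which i is a root of G are the (k+1)-forests in which the
   new arc i -> m brings i into the tree of j; the other pairs cancel by
   [sum_joins_leaves]. *)
Lemma Qk_recurrence_offdiag k i j : i != j ->
  Qk w k.+1 i j + \sum_m w i m * (Qk w k i j - Qk w k m j) = 0.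
Proof.
move=> ij; rewrite sum_weighted_Qk_diff.
rewrite (bigID (fun p => p.1 i == None) (fun p => [&& _, _ & rooted_at p.1 p.2 j])) /=.
have -> : Qk w k.+1 i j = \sum_(p | [&& inforest w p.1, narcs p.1 == k & rooted_at p.1 p.2 j]
                                   && (p.1 i == None)) pair_weight i p.
  rewrite mxE (eq_bigl (fun H => (H i != None) &&
                 [&& inforest w H, narcs H == k.+1 & rooted_at H i j])) => [|H]; last first.
    by case r: (rooted_at H i j); rewrite ?andbF // (rooted_at_nonroot r ij).
  rewrite sum_nonroot_pairs; apply: eq_bigl_nz => -[G m] /pair_weight_neq0 /= wim.
  by case: eqP => [Gi|]; rewrite ?andbT ?andbF // inforest_attach_rooted_at.
rewrite opprD addrCA addNKr (sumrB_indicators (C := leaves_tree i j k) (D := joins_tree i j k)).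
  by rewrite sum_joins_leaves ?subrr.
move=> [G m] /pair_weight_neq0 /= wim; rewrite /leaves_tree /joins_tree wim /=.
have := @rooted_at_nonroot _ G i j; case: (rooted_at G i j); case: (rooted_at G m j);
  case: (G i == None); case: (inforest w G); case: (narcs G == k) => //= nr; try ring.
by have := nr isT ij.
Qed.

(* A (k+1)-forest in which i is not a root arises exactly once by attaching the
   root i of a k-forest to a vertex m outside the tree of i. *)
Lemma Qk_recurrence_diag k i :
  Qk w k.+1 i i + \sum_m w i m * (Qk w k i i - Qk w k m i) = sigmak w k.+1.
Proof.
rewrite /sigmak (bigID (fun f => f i == None)) /=; congr (_ + _).
  by rewrite mxE; apply: eq_bigl => f; rewrite rooted_at_id andbA.
rewrite (eq_bigl (fun H => (H i != None) && (inforest w H && (narcs H == k.+1))));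
  last by move=> H; rewrite andbC.
rewrite sum_weighted_Qk_diff sum_nonroot_pairs -[RHS]subr0.
rewrite -[X in _ = _ - X](big_pred0_eq 0 +%R (index_enum _) (pair_weight i)).
apply: sumrB_indicators => -[G m] /pair_weight_neq0 /= wim; rewrite rooted_at_id subr0.
case: (eqVneq (G i) None) => Gi; last first.
  have -> : rooted_at G m i = false by apply/negP => /rooted_at_root/eqP; apply/negP.
  by rewrite !andbF subrr.
rewrite inforest_attach //=.
by case: (inforest w G); case: (narcs G == k); case: (rooted_at G m i) => //=; ring.
Qed.

Lemma laplacian_mulmx (Q : 'M[R]_n) i j :
  (laplacian w *m Q) i j = \sum_m w i m * (Q i j - Q m j).
Proof.
rewrite mxE (bigD1 i) //= [RHS](bigD1 i) //= subrr mulr0 add0r mxE eqxx.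
rewrite mulr_suml -big_split /=; apply: eq_bigr => m ne.
by rewrite mxE eq_sym (negbTE ne) mulrBr mulNr.
Qed.

Lemma Qk_recurrence k : Qk w k.+1 + laplacian w *m Qk w k = sigmak w k.+1 *: 1%:M.
Proof.
apply/matrixP => i j; rewrite [LHS]mxE laplacian_mulmx [RHS]mxE [in RHS]mxE.
case: eqVneq => [<-|ij]; rewrite ?mulr1 ?mulr0.
- exact: Qk_recurrence_diag.
- exact: Qk_recurrence_offdiag.
Qed.

Lemma fweight_edgeless : fweight w (edgeless n) = 1.
Proof. by rewrite /fweight big1 // => i _; rewrite ffunE. Qed.

Lemma inforest_edgeless : inforest w (edgeless n).
Proof. by apply/inforestP; split; [move=> i j; rewrite ffunE | apply: acyclic_edgeless]. Qed.

Lemma inforest_narcs0 f : (inforest w f && (narcs f == 0%N)) = (f == edgeless n).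
Proof.
apply/andP/eqP => [[_ /eqP /narcs_eq0] //|->].
by rewrite inforest_edgeless narcs_edgeless.
Qed.

Lemma sigmak0 : sigmak w 0 = 1.
Proof. by rewrite /sigmak (eq_bigl _ _ inforest_narcs0) big_pred1_eq fweight_edgeless. Qed.

Lemma Qk0 : Qk w 0 = 1%:M.
Proof.
apply/matrixP => i j; rewrite !mxE (eq_bigl (fun f => (f == edgeless n) && (i == j))) => [|f].
  case: (i == j); last by rewrite big_pred0 // => f; rewrite andbF.
  by rewrite (eq_bigl _ _ (fun f => andbT _)) big_pred1_eq fweight_edgeless.
by rewrite andbA inforest_narcs0; case: eqP => // ->; rewrite rooted_at_edgeless.
Qed.

Lemma inforest_dim_le f : inforest w f -> (inforest_dim w <= ntrees f)%N.
Proof. by move=> Ff; rewrite /inforest_dim (bigD1 f) //= geq_minl. Qed.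

Lemma inforest_dim_attained : exists2 f, inforest w f & ntrees f = inforest_dim w.
Proof.
apply: (big_ind (fun d => exists2 f, inforest w f & ntrees f = d)).
- by exists (edgeless n); [apply: inforest_edgeless | apply: ntrees_edgeless].
- move=> _ _ [f Ff <-] [f' Ff' <-]; case: (leqP (ntrees f) (ntrees f')) => h.
    by exists f; rewrite ?(minn_idPl h).
  by exists f'; rewrite ?(minn_idPr (ltnW h)).
- by move=> f Ff; exists f.
Qed.

Lemma narcs_le_top f : inforest w f -> (narcs f <= n - inforest_dim w)%N.
Proof. by move/inforest_dim_le; have := ntrees_narcs f; lia. Qed.

Lemma sigmak_eq0 k : (n - inforest_dim w < k)%N -> sigmak w k = 0.
Proof.
move=> lt; rewrite /sigmak big_pred0 // => f; apply/negP => /andP [/narcs_le_top + /eqP nk].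
by rewrite nk leqNgt lt.
Qed.

Lemma Qk_eq0 k : (n - inforest_dim w < k)%N -> Qk w k = 0.
Proof.
move=> lt; apply/matrixP => i j; rewrite !mxE big_pred0 // => f.
by apply/negP => /and3P [/narcs_le_top + /eqP nk _]; rewrite nk leqNgt lt.
Qed.

Lemma matrix_forest_identity tau :
  (1%:M + tau *: laplacian w) *m Q_t w tau = sigma_t w tau *: 1%:M.
Proof.
set N := (n - inforest_dim w)%N.
pose g k := tau ^+ k *: (sigmak w k *: 1%:M - Qk w k).
have LQ k : laplacian w *m Qk w k = sigmak w k.+1 *: 1%:M - Qk w k.+1.
  by rewrite -(Qk_recurrence k) addrC addKr.
have term k : (1%:M + tau *: laplacian w) *m (tau ^+ k *: Qk w k) =
    (sigmak w k * tau ^+ k) *: 1%:M + (g k.+1 - g k).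
  rewrite mulmxDl mul1mx -scalemxAl -scalemxAr LQ scalerA -exprS /g.
  set c := (sigmak w k * tau ^+ k) *: 1%:M; set b := tau ^+ k.+1 *: _.
  have -> : tau ^+ k *: (sigmak w k *: 1%:M - Qk w k) = c - tau ^+ k *: Qk w k.
    by rewrite scalerBr scalerA mulrC.
  by rewrite opprB addrCA (addrC c) subrK addrC.
have g0 : g 0%N = 0 by rewrite /g sigmak0 Qk0 scale1r subrr scaler0.
have gN : g N.+1 = 0 by rewrite /g sigmak_eq0 ?Qk_eq0 // scale0r subr0 scaler0.
rewrite /Q_t mulmx_sumr; under eq_bigr do rewrite term.
rewrite big_split /= -(big_mkord xpredT (fun k => g k.+1 - g k)) telescope_sumr //.
by rewrite g0 gN subrr addr0 /sigma_t scaler_suml.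
Qed.

Lemma fweight_ge0 f : 0 <= fweight w f.
Proof. by apply: prodr_ge0 => i _; case: (f i) => [j|] //; apply: w_ge0. Qed.

Lemma sigma_t_gt0 tau : 0 <= tau -> 0 < sigma_t w tau.
Proof.
move=> tau0; rewrite /sigma_t big_ord_recl /= sigmak0 expr0 mulr1 ltr_pwDl //.
apply: sumr_ge0 => k _; apply: mulr_ge0; last exact: exprn_ge0.
by apply: sumr_ge0 => f _; apply: fweight_ge0.
Qed.

Lemma sigmak_top_gt0 : 0 < sigmak w (n - inforest_dim w).
Proof.
have [f Ff nt] := inforest_dim_attained.
have nk : narcs f = (n - inforest_dim w)%N by have := ntrees_narcs f; lia.
have fpos : 0 < fweight w f.
  apply: prodr_gt0 => i _; case E: (f i) => [j|] //.
  by have [arcs _] := (inforestP f).1 Ff; apply: arcs E.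
rewrite /sigmak (bigD1 f) /=; last by rewrite Ff nk eqxx.
by rewrite ltr_pwDl // sumr_ge0 // => g _; apply: fweight_ge0.
Qed.

Lemma invmx_J_t tau : 0 <= tau -> invmx (1%:M + tau *: laplacian w) = J_t w tau.
Proof.
move=> tau0; have inv : (1%:M + tau *: laplacian w) *m J_t w tau = 1%:M.
  rewrite /J_t -scalemxAr matrix_forest_identity scalerA mulVf ?scale1r //.
  exact/lt0r_neq0/sigma_t_gt0.
have [unit _] := mulmx1_unit inv.
by have := mulKmx unit (J_t w tau); rewrite inv mulmx1.
Qed.

End Forests.

Section RationalLimits.
Variable R : realType.

Lemma cvg_invX_pinfty m : (fun t : R => t^-1 ^+ m) @ +oo --> (0 : R) ^+ m.
Proof.
have inv0 : (fun t : R => t^-1) @ +oo --> (0 : R).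
  apply/gtr0_cvgV0; last exact: cvg_id.
  by near=> t; near: t; apply: nbhs_pinfty_gt.
elim: m => [|m IH]; first by under eq_cvg do rewrite expr0; rewrite expr0; apply: cvg_cst.
by under eq_cvg do rewrite exprS; rewrite exprS; apply: cvgM.
Unshelve. all: by end_near.
Qed.

Lemma cvg_reversed_poly (V : normedModType R) N (a : nat -> V) :
  (fun t : R => \sum_(k < N.+1) t^-1 ^+ (N - k) *: a k) @ +oo --> a N.
Proof.
have -> : a N = \sum_(k < N.+1) 0 ^+ (N - k) *: a k.
  rewrite big_ord_recr /= subnn expr0 scale1r big1 ?add0r // => k _.
  by rewrite expr0n subn_eq0 leqNgt ltn_ord scale0r.
apply: cvg_big => [|k _]; first exact: add_continuous.
by apply: cvgZ; [apply: cvg_invX_pinfty | apply: cvg_cst].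
Qed.

Lemma expr_from_top (t : R) N k : t != 0 -> (k <= N)%N -> t ^+ k = t ^+ N * t^-1 ^+ (N - k).
Proof.
move=> t0 le; rewrite -{1}(subnK le) exprD exprVn mulrAC mulfV ?mul1r //.
exact: expf_neq0.
Qed.

Lemma rational_cvg_pinfty (V : normedModType R) N (s : nat -> R) (v : nat -> V) : s N != 0 ->
  (fun t : R => (\sum_(k < N.+1) s k * t ^+ k)^-1 *: \sum_(k < N.+1) t ^+ k *: v k)
    @ +oo --> (s N)^-1 *: v N.
Proof.
move=> sN; have hs := cvg_reversed_poly (N := N) (a := s).
apply: cvg_trans (cvgZ (cvgV sN hs) (cvg_reversed_poly (N := N) (a := v))).
apply: near_eq_cvg; near=> t.
have t0 : t != 0 by apply: lt0r_neq0; near: t; apply: nbhs_pinfty_gt.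
have tN : t ^+ N != 0 by apply: expf_neq0.
have -> : \sum_(k < N.+1) s k * t ^+ k = t ^+ N * \sum_(k < N.+1) t^-1 ^+ (N - k) *: s k.
  rewrite mulr_sumr; apply: eq_bigr => k _.
  by rewrite (expr_from_top t0 (ltnSE (ltn_ord k))) mulrCA [s k * _]mulrC.
have -> : \sum_(k < N.+1) t ^+ k *: v k = t ^+ N *: \sum_(k < N.+1) t^-1 ^+ (N - k) *: v k.
  rewrite scaler_sumr; apply: eq_bigr => k _.
  by rewrite (expr_from_top t0 (ltnSE (ltn_ord k))) scalerA.
by rewrite scalerA invfM mulrAC mulVf ?mul1r.
Unshelve. all: by end_near.
Qed.

End RationalLimits.

Theorem proposition11 (R : realType) (n : nat) (w : 'M[R]_n)
  (hn : (1 < n)%N)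
  (hloop : forall i, w i i = 0)
  (hnonneg : forall i j, 0 <= w i j) :
  (J_t w @ +oo --> J_tilde w) /\
  ((fun tau : R => invmx (1%:M + tau *: laplacian w)) @ +oo --> J_tilde w).
Proof.
have hJ : J_t w @ +oo --> J_tilde w.
  exact: rational_cvg_pinfty (lt0r_neq0 (sigmak_top_gt0 hnonneg)).
split=> //; apply: cvg_trans (near_eq_cvg _) hJ; near=> tau.
rewrite invmx_J_t //; apply: ltW; near: tau; apply: nbhs_pinfty_gt.
Unshelve. all: by end_near.
Qed.
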